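(* Let $\mu_c,\mu_s\in\mathbb{R}$, $c\ge0$, $\sigma_c,\sigma_s>0$, $\eta_c,\eta_s>0$. Let $U^*$ be the optimal value of $$\max_{r\in\mathbb{R}}\; p_0+r\mu_c-c-\eta_c r^2\sigma_c^2\quad\text{subject to}\quad p_0=\mu_s(1-r)-\eta_s\sigma_s^2(1-r)^2,$$ and let $U_0=\mu_s-\eta_s\sigma_s^2-c$ be the creator utility without royalties ($r=0$). Then the utility gain from royalties is $$f:=U^*-U_0=\frac{\big(2\eta_s\sigma_s^2-\mu_s+\mu_c\big)^2}{4\big(\eta_s\sigma_s^2+\eta_c\sigma_c^2\big)}\ge 0.$$ Moreover, viewing $f$ as a function of $(\mu_s,\mu_c,\eta_s,\eta_c,\sigma_s,\sigma_c)$: $f$ is increasing in $\sigma_s$ (i.e. $\partial f/\partial\sigma_s\ge0$) if and only if $-2\eta_s\sigma_s^2-4\eta_c\sigma_c^2\le\mu_s-\mu_c\le 2\eta_s\sigma_s^2$; and $f$ (weakly) decreases as $\sigma_c$ increases.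
   Context: Interpretation: a creator sells an NFT at mint price $p_0$ with royalty rate $r$ to a speculator who resells at the realized end-buyer valuation $V$. The creator believes $\mathbb{E}[V]=\mu_c$, $\mathrm{Var}(V)=\sigma_c^2$; the speculator believes $\mathbb{E}[V]=\mu_s$, $\mathrm{Var}(V)=\sigma_s^2$. Each has mean-variance utility with risk-aversion coefficient $\eta_c$ resp. $\eta_s$ (creator profit $p_0+rV-c$, speculator profit $(1-r)V-p_0$); the constraint is the speculator's binding participation constraint under his own beliefs. *)

From Stdlib Require Import Reals.
From Coquelicot Require Import Coquelicot.
Open Scope R_scope.

(* Mint price forced by the speculator's binding participation constraint. *)
Definition mint_price (mus etas sigs r : R) : R :=
  mus * (1 - r) - etas * sigs ^ 2 * (1 - r) ^ 2.

Definition creator_obj (mus muc etas etac sigs sigc c r : R) : R :=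
  mint_price mus etas sigs r + r * muc - c - etac * r ^ 2 * sigc ^ 2.

Definition Ustar (mus muc etas etac sigs sigc c : R) : R :=
  real (Lub_Rbar (fun v => exists r : R, v = creator_obj mus muc etas etac sigs sigc c r)).

Definition U0 (mus etas sigs c : R) : R := mus - etas * sigs ^ 2 - c.

Definition gain (mus muc etas etac sigs sigc c : R) : R :=
  Ustar mus muc etas etac sigs sigc c - U0 mus etas sigs c.

(* Substituting the binding participation constraint turns the creator's
   objective into the concave quadratic  U0 + N^2/(4M) - M (r - N/(2M))^2  in the
   royalty rate r, where  N = 2 etas sigs^2 - mus + muc  and
   M = etas sigs^2 + etac sigc^2 > 0.  So U* is attained at r = N/(2M) and the
   gain is N^2/(4M).  Its sigs-derivative is  etas sigs N (4M - N) / (2 M^2),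
   and since N + (4M - N) = 4M > 0 it is nonnegative exactly when both N and
   4M - N are; sigc only enlarges M, so the gain decreases in sigc. *)

From Stdlib Require Import Reals Lra Psatz.
From Coquelicot Require Import Coquelicot.
Open Scope R_scope.

Lemma Lub_Rbar_range_max (f : R -> R) (r0 : R) :
  (forall r, f r <= f r0) -> real (Lub_Rbar (fun v => exists r, v = f r)) = f r0.
Proof.
  intros f_le.
  rewrite (is_lub_Rbar_unique _ (Finite (f r0))); [reflexivity |].
  split.
  - intros v [r ->]. apply f_le.
  - intros b ub_b. apply ub_b. exists r0. reflexivity.
Qed.

Lemma Rmult_nonneg_iff_sum_pos (x y : R) :
  0 < x + y -> (0 <= x * y <-> 0 <= x /\ 0 <= y).
Proof. intros sum_pos. split; [intros xy_ge0 | intros [x_ge0 y_ge0]]; nra. Qed.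

Definition optimal_royalty (mus muc etas etac sigs sigc : R) : R :=
  (2 * etas * sigs ^ 2 - mus + muc) / (2 * (etas * sigs ^ 2 + etac * sigc ^ 2)).

Definition gain_formula (mus muc etas etac sigs sigc : R) : R :=
  (2 * etas * sigs ^ 2 - mus + muc) ^ 2 / (4 * (etas * sigs ^ 2 + etac * sigc ^ 2)).

Lemma risk_load_pos (etas etac sigs sigc : R) :
  0 <= etas -> 0 < etac -> 0 < sigc -> 0 < etas * sigs ^ 2 + etac * sigc ^ 2.
Proof.
  intros hetas hetac hsigc.
  assert (0 <= etas * sigs ^ 2) by (apply Rmult_le_pos; [lra | apply pow2_ge_0]).
  assert (0 < etac * sigc ^ 2) by (apply Rmult_lt_0_compat; [lra | apply pow_lt; lra]).
  lra.
Qed.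

Section OptimalRoyalty.

Variables (mus muc etas etac sigs sigc c : R).
Hypothesis risk_pos : 0 < etas * sigs ^ 2 + etac * sigc ^ 2.

Lemma creator_obj_complete_square (r : R) :
  creator_obj mus muc etas etac sigs sigc c r
  = U0 mus etas sigs c + gain_formula mus muc etas etac sigs sigc
    - (etas * sigs ^ 2 + etac * sigc ^ 2) * (r - optimal_royalty mus muc etas etac sigs sigc) ^ 2.
Proof.
  unfold creator_obj, mint_price, U0, gain_formula, optimal_royalty.
  field. lra.
Qed.

Lemma creator_obj_le_optimal (r : R) :
  creator_obj mus muc etas etac sigs sigc c r
  <= creator_obj mus muc etas etac sigs sigc c (optimal_royalty mus muc etas etac sigs sigc).
Proof.
  rewrite !creator_obj_complete_square, Rminus_diag.
  pose proof (pow2_ge_0 (r - optimal_royalty mus muc etas etac sigs sigc)).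
  nra.
Qed.

Lemma Ustar_optimal :
  Ustar mus muc etas etac sigs sigc c
  = creator_obj mus muc etas etac sigs sigc c (optimal_royalty mus muc etas etac sigs sigc).
Proof. apply Lub_Rbar_range_max, creator_obj_le_optimal. Qed.

Lemma gain_eq_formula :
  gain mus muc etas etac sigs sigc c = gain_formula mus muc etas etac sigs sigc.
Proof.
  unfold gain. rewrite Ustar_optimal, creator_obj_complete_square. ring.
Qed.

Lemma gain_formula_ge0 : 0 <= gain_formula mus muc etas etac sigs sigc.
Proof.
  apply Rdiv_le_0_compat; [apply pow2_ge_0 | lra].
Qed.

Lemma is_derive_gain_formula_sigs :
  is_derive (fun s => gain_formula mus muc etas etac s sigc) sigs
    (let N := 2 * etas * sigs ^ 2 - mus + muc in
     let M := etas * sigs ^ 2 + etac * sigc ^ 2 in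
     etas * sigs * N * (4 * M - N) / (2 * M ^ 2)).
Proof.
  unfold gain_formula. auto_derive; [lra | field; lra].
Qed.

End OptimalRoyalty.

Section Sensitivity.

Variables (mus muc etas etac c : R).
Hypotheses (hetas : 0 < etas) (hetac : 0 < etac).

Lemma Derive_gain_sigs (sigs sigc : R) : 0 < sigc ->
  Derive (fun s => gain mus muc etas etac s sigc c) sigs
  = let N := 2 * etas * sigs ^ 2 - mus + muc in
    let M := etas * sigs ^ 2 + etac * sigc ^ 2 in
    etas * sigs * N * (4 * M - N) / (2 * M ^ 2).
Proof.
  intros hsigc.
  rewrite (Derive_ext _ (fun s => gain_formula mus muc etas etac s sigc)).
  - apply is_derive_unique, is_derive_gain_formula_sigs, risk_load_pos; lra.
  - intros s. apply gain_eq_formula, risk_load_pos; lra.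
Qed.

Lemma gain_sigs_increasing_iff (sigs sigc : R) : 0 < sigs -> 0 < sigc ->
  0 <= Derive (fun s => gain mus muc etas etac s sigc c) sigs
  <-> - 2 * etas * sigs ^ 2 - 4 * etac * sigc ^ 2 <= mus - muc
      /\ mus - muc <= 2 * etas * sigs ^ 2.
Proof.
  intros hsigs hsigc.
  rewrite Derive_gain_sigs by exact hsigc; cbv zeta.
  set (N := 2 * etas * sigs ^ 2 - mus + muc).
  set (M := etas * sigs ^ 2 + etac * sigc ^ 2).
  assert (M_pos : 0 < M) by (apply risk_load_pos; lra).
  assert (scale_pos : 0 < etas * sigs / (2 * M ^ 2)).
  { apply Rdiv_lt_0_compat; [nra | apply Rmult_lt_0_compat; [lra | apply pow_lt; lra]]. }
  replace (etas * sigs * N * (4 * M - N) / (2 * M ^ 2))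
    with (etas * sigs / (2 * M ^ 2) * (N * (4 * M - N))) by (field; lra).
  transitivity (0 <= N * (4 * M - N)).
  - split; intros; nra.
  - rewrite Rmult_nonneg_iff_sum_pos by lra.
    unfold N, M. lra.
Qed.

Lemma gain_sigc_antitone (sigs s1 s2 : R) : 0 < s1 -> s1 <= s2 ->
  gain mus muc etas etac sigs s2 c <= gain mus muc etas etac sigs s1 c.
Proof.
  intros hs1 hs12.
  rewrite !gain_eq_formula by (apply risk_load_pos; lra).
  unfold gain_formula, Rdiv.
  apply Rmult_le_compat_l; [apply pow2_ge_0 |].
  apply Rinv_le_contravar.
  - pose proof (risk_load_pos etas etac sigs s1); lra.
  - assert (s1 ^ 2 <= s2 ^ 2) by (apply pow_incr; lra). nra.
Qed.

End Sensitivity.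

Theorem theorem8 (mus muc c sigc sigs etac etas : R)
  (hc : 0 <= c) (hsigc : 0 < sigc) (hsigs : 0 < sigs)
  (hetac : 0 < etac) (hetas : 0 < etas) :
  (* U* is attained, i.e. it is the maximum of the problem *)
  (exists r : R, creator_obj mus muc etas etac sigs sigc c r = Ustar mus muc etas etac sigs sigc c) /\
  (forall r : R, creator_obj mus muc etas etac sigs sigc c r <= Ustar mus muc etas etac sigs sigc c) /\
  (* closed form of the gain and its nonnegativity *)
  gain mus muc etas etac sigs sigc c
    = (2 * etas * sigs ^ 2 - mus + muc) ^ 2 / (4 * (etas * sigs ^ 2 + etac * sigc ^ 2)) /\
  0 <= gain mus muc etas etac sigs sigc c /\
  (* monotonicity in sigma_s *)
  (0 <= Derive (fun s => gain mus muc etas etac s sigc c) sigs <->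
     - 2 * etas * sigs ^ 2 - 4 * etac * sigc ^ 2 <= mus - muc /\ mus - muc <= 2 * etas * sigs ^ 2) /\
  (* weakly decreasing in sigma_c on sigma_c > 0 *)
  (forall s1 s2 : R, 0 < s1 -> s1 <= s2 ->
     gain mus muc etas etac sigs s2 c <= gain mus muc etas etac sigs s1 c).
Proof.
  assert (risk_pos : 0 < etas * sigs ^ 2 + etac * sigc ^ 2)
    by (apply risk_load_pos; lra).
  rewrite Ustar_optimal, gain_eq_formula by exact risk_pos.
  split; [| split; [| split; [| split; [| split]]]].
  - exists (optimal_royalty mus muc etas etac sigs sigc). reflexivity.
  - apply creator_obj_le_optimal, risk_pos.
  - reflexivity.
  - apply gain_formula_ge0, risk_pos.
  - apply gain_sigs_increasing_iff; assumption.
  - intros s1 s2. apply gain_sigc_antitone; assumption.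
Qed.
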